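(* Let $y_1,y_2,y_3>0$ with $y_1=4y_2y_3$, let $g=y_1Q|_{\mathfrak m_1}+y_2Q|_{\mathfrak m_2}+y_3Q|_{\mathfrak m_3}$ with orthonormal basis $X_1,\dots,X_7$, and consider the $\mathrm{SO}(5)$-invariant tensors on $V^{5,2}$ given by $\xi=X_1$, $\eta=X^1$, and the endomorphism $\Phi$ of $\mathfrak m$ with $\Phi X_1=0$, $\Phi X_i=-X_{i+3}$, $\Phi X_{i+3}=X_i$ for $i=2,3,4$. Then $(\eta,\xi,g,\Phi)$, which is a contact metric structure, is a Sasakian structure if and only if $y_1=4y_2^2$ and $y_2=y_3$.
   Context: Basis of $\mathfrak{so}(5)$ (with $E_{ij}$ the elementary $5\times5$ matrices): $e_1=E_{12}-E_{21}$, $e_2=E_{13}-E_{31}$, $e_3=E_{14}-E_{41}$, $e_4=E_{15}-E_{51}$, $e_5=E_{23}-E_{32}$, $e_6=E_{24}-E_{42}$, $e_7=E_{25}-E_{52}$, $e_8=E_{34}-E_{43}$, $e_9=E_{35}-E_{53}$, $e_{10}=E_{54}-E_{45}$; bracket = commutator. $V^{5,2}=\mathrm{SO}(5)/\mathrm{SO}(3)$ with $\mathrm{Lie}(\mathrm{SO}(3))=\mathrm{span}\{e_8,e_9,e_{10}\}$; $\mathfrak m=\mathrm{span}\{e_1,\dots,e_7\}$ is identified with the tangent space at the origin and invariant tensors with $\mathrm{Ad}(\mathrm{SO}(3))$-invariant tensors on $\mathfrak m$. $Q(A,B)=\frac12\mathrm{tr}(AB^T)$; $\mathfrak m_1=\mathrm{span}\{e_1\}$,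 $\mathfrak m_2=\mathrm{span}\{e_2,e_3,e_4\}$, $\mathfrak m_3=\mathrm{span}\{e_5,e_6,e_7\}$, mutually $g$-orthogonal. $X_1=e_1/\sqrt{y_1}$, $X_i=e_i/\sqrt{y_2}$ ($i=2,3,4$), $X_i=e_i/\sqrt{y_3}$ ($i=5,6,7$), with dual coframe $X^i$. A contact metric structure $(\eta,\xi,g,\Phi)$ satisfies $\eta\wedge(d\eta)^3\neq0$, $\eta(\xi)=1$, $\Phi^2=-I+\eta\otimes\xi$, $g(\Phi X,\Phi Y)=g(X,Y)-\eta(X)\eta(Y)$, $d\eta(X,Y)=2g(X,\Phi Y)$. It is Sasakian if it is normal, i.e. the Nijenhuis tensor $N_\Phi(X,Y)=[\Phi X,\Phi Y]+\Phi^2[X,Y]-\Phi[\Phi X,Y]-\Phi[X,\Phi Y]$ satisfies $N_\Phi=-d\eta\otimes\xi$. *)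

(* Model of the isotropy representation of V^{5,2} = SO(5)/SO(3):
   m = span{e1,...,e7} is identified with 'rV[R]_7 via coordinates in the basis
   e_1..e_7 (index k : 'I_7 stands for e_{k+1}). *)
From HB Require Import structures.
From mathcomp Require Import all_boot all_order all_algebra all_fingroup.
Set Implicit Arguments. Unset Strict Implicit. Unset Printing Implicit Defensive.
Import Order.TTheory GRing.Theory Num.Theory.
Local Open Scope ring_scope.

Section V52.
Variable R : rcfType.

(* e_{k+1} = E_{mrow k, mcol k} - E_{mcol k, mrow k}  (0-based matrix indices) *)
Definition mrow (k : 'I_7) : 'I_5 := inord (nth 0%N [:: 0; 0; 0; 0; 1; 1; 1]%N k).
Definition mcol (k : 'I_7) : 'I_5 := inord (nth 0%N [:: 1; 2; 3; 4; 2; 3; 4]%N k).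

Definition ebas (k : 'I_7) : 'M[R]_5 :=
  delta_mx (mrow k) (mcol k) - delta_mx (mcol k) (mrow k).

Definition emb (u : 'rV[R]_7) : 'M[R]_5 := \sum_(k < 7) u 0 k *: ebas k.

(* m-component (coordinates in e_1..e_7) of a skew matrix in so(5);
   the h = span{e8,e9,e10} part does not touch these entries *)
Definition mcoord (A : 'M[R]_5) : 'rV[R]_7 := \row_k A (mrow k) (mcol k).

Definition brm (u v : 'rV[R]_7) : 'rV[R]_7 :=
  mcoord (emb u *m emb v - emb v *m emb u).

(* weights: g = y1 Q|m1 + y2 Q|m2 + y3 Q|m3 ; Q(e_i,e_j) = delta_ij *)
Definition wt (y1 y2 y3 : R) (k : 'I_7) : R :=
  if (k == 0 :> nat) then y1 else if (k <= 3)%N then y2 else y3.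

Definition gm (y1 y2 y3 : R) (u v : 'rV[R]_7) : R :=
  \sum_(k < 7) wt y1 y2 y3 k * u 0 k * v 0 k.

Definition Xf (y1 y2 y3 : R) (k : 'I_7) : 'rV[R]_7 :=
  (Num.sqrt (wt y1 y2 y3 k))^-1 *: delta_mx 0 k.

Definition Xco (y1 y2 y3 : R) (k : 'I_7) (u : 'rV[R]_7) : R :=
  Num.sqrt (wt y1 y2 y3 k) * u 0 k.

Definition PhiX (y1 y2 y3 : R) (k : 'I_7) : 'rV[R]_7 :=
  if (k == 0 :> nat) then 0
  else if (k <= 3)%N then - Xf y1 y2 y3 (inord (k + 3))
  else Xf y1 y2 y3 (inord (k - 3)).

Definition Phi (y1 y2 y3 : R) (u : 'rV[R]_7) : 'rV[R]_7 :=
  \sum_(k < 7) Xco y1 y2 y3 k u *: PhiX y1 y2 y3 k.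

Definition xi (y1 y2 y3 : R) : 'rV[R]_7 := Xf y1 y2 y3 0.
Definition eta (y1 y2 y3 : R) (u : 'rV[R]_7) : R := Xco y1 y2 y3 0 u.

(* exterior derivative of the invariant 1-form eta at the origin
   (convention d eta(X,Y) = X eta(Y) - Y eta(X) - eta([X,Y])) *)
Definition deta (y1 y2 y3 : R) (u v : 'rV[R]_7) : R := - eta y1 y2 y3 (brm u v).

Definition Nij (y1 y2 y3 : R) (u v : 'rV[R]_7) : 'rV[R]_7 :=
  let P := Phi y1 y2 y3 in
  brm (P u) (P v) + P (P (brm u v)) - P (brm (P u) v) - P (brm u (P v)).

Definition ecan (k : 'I_7) : 'rV[R]_7 := delta_mx 0 k.

(* (eta /\ (d eta)^3)(e_1,...,e_7), up to the nonzero factor 1/(1!2!2!2!) *)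
Definition eta_deta3 (y1 y2 y3 : R) : R :=
  \sum_(s : 'S_7) (-1) ^+ odd_perm s *
    eta y1 y2 y3 (ecan (s (inord 0)))
    * deta y1 y2 y3 (ecan (s (inord 1))) (ecan (s (inord 2)))
    * deta y1 y2 y3 (ecan (s (inord 3))) (ecan (s (inord 4)))
    * deta y1 y2 y3 (ecan (s (inord 5))) (ecan (s (inord 6))).

Definition contact_metric (y1 y2 y3 : R) : Prop :=
  [/\ eta_deta3 y1 y2 y3 != 0,
      eta y1 y2 y3 (xi y1 y2 y3) = 1,
      (forall u, Phi y1 y2 y3 (Phi y1 y2 y3 u) = - u + eta y1 y2 y3 u *: xi y1 y2 y3),
      (forall u v, gm y1 y2 y3 (Phi y1 y2 y3 u) (Phi y1 y2 y3 v)
                   = gm y1 y2 y3 u v - eta y1 y2 y3 u * eta y1 y2 y3 v) &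
      (forall u v, deta y1 y2 y3 u v = 2 * gm y1 y2 y3 u (Phi y1 y2 y3 v))].

Definition normal (y1 y2 y3 : R) : Prop :=
  forall u v, Nij y1 y2 y3 u v = - deta y1 y2 y3 u v *: xi y1 y2 y3.

Definition sasakian (y1 y2 y3 : R) : Prop :=
  contact_metric y1 y2 y3 /\ normal y1 y2 y3.

End V52.

From Pilot Require Import Defs.
From HB Require Import structures.
From mathcomp Require Import all_boot all_order all_algebra all_fingroup.
From mathcomp Require Import ring.
Import Order.TTheory GRing.Theory Num.Theory.
Set Implicit Arguments.
Unset Strict Implicit.
Unset Printing Implicit Defensive.
Local Open Scope ring_scope.

(* In the basis e_1, ..., e_7 the m-part of the bracket maps m1 x m2 to m3, m1 x m3 to m2 and
   m2 x m3 to m1, while Phi sends m3 to m2 with factor l = sqrt (y3 / y2) and m2 to m3 with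
   factor -1/l.  Writing y1, y2, y3 as squares r^2, p^2, q^2, every tensor identity becomes a
   rational identity in the coordinates.  The contact-metric axioms then hold as soon as
   r = 2 p q, i.e. y1 = 4 y2 y3, and the Nijenhuis tensor satisfies
   N(u, v) + d eta(u, v) xi = (y3 - y2) B(u, v) with B(e_1, e_2) <> 0, so that normality is
   exactly y2 = y3.
   For eta /\ (d eta)^3, d eta(e_a, e_b) vanishes unless b is the partner of a (e_2 <-> e_5,
   e_3 <-> e_6, e_4 <-> e_7); expanding it over the first index of each pair turns the
   alternating sum over S_7 into a sum of determinants of matrices with a single nonzero entry
   in each row.  Each of them is the product of these entries times the sign of the column map
   (0 if it is not a bijection), and multiplying by the Vandermonde determinant of 0, ..., 6
   computes that sign without enumerating permutations.  Altogether
   eta /\ (d eta)^3 = -48 (sqrt y1)^4. *)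

Local Notation o k := (@Ordinal 7 k isT).

Lemma inord7 k (hk : (k < 7)%N) : inord k = Ordinal hk.
Proof. by apply: val_inj; rewrite /= inordK. Qed.

Section BigSums.
Variables (R : comNzRingType) (I J : finType).

Lemma sum_pick (a : I) (F : I -> R) : \sum_t (a == t)%:R * F t = F a.
Proof.
rewrite (bigD1 a) //= eqxx mul1r big1 ?addr0 // => t /negbTE.
by rewrite eq_sym => ->; rewrite mul0r.
Qed.

Lemma exchange_sum3 (F : I -> I -> I -> J -> R) :
  \sum_t1 \sum_t2 \sum_t3 \sum_s F t1 t2 t3 s = \sum_s \sum_t1 \sum_t2 \sum_t3 F t1 t2 t3 s.
Proof.
under eq_bigr do under eq_bigr do rewrite exchange_big.
by under eq_bigr do rewrite exchange_big; rewrite exchange_big.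
Qed.

Lemma sum3_mul (K : R) (X1 X2 X3 : I -> R) :
  \sum_t1 \sum_t2 \sum_t3 (K * X1 t1 * X2 t2 * X3 t3) =
  K * (\sum_t X1 t) * (\sum_t X2 t) * (\sum_t X3 t).
Proof.
rewrite [K * _]mulr_sumr !mulr_suml; apply: eq_bigr => t1 _.
rewrite [K * X1 t1 * _]mulr_sumr mulr_suml; apply: eq_bigr => t2 _.
by rewrite mulr_sumr; apply: eq_bigr => t3 _.
Qed.

End BigSums.

Section SelectionMatrix.
Variable R : comNzRingType.

Definition sel_mx n (c : 'I_n -> R) (f : 'I_n -> 'I_n) : 'M[R]_n :=
  \matrix_(i, k) (c i * (k == f i)%:R).

Definition vdm n (x : 'I_n -> R) : R := \prod_(i < n) \prod_(j < n | (i < j)%N) (x j - x i).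

Lemma det_sel_mx_vdm n (c : 'I_n -> R) (f : 'I_n -> 'I_n) :
  \det (sel_mx c f) * vdm (fun i : 'I_n => i%:R) = \prod_i c i * vdm (fun i => (f i : nat)%:R).
Proof.
have vdmE (x : 'I_n -> R) : vdm x = \det (Vandermonde n (\row_i x i)).
  by rewrite det_Vandermonde; apply: eq_bigr => i _; apply: eq_bigr => j _; rewrite !mxE.
rewrite !vdmE -[X in _ * X]det_tr -det_mulmx.
have -> : sel_mx c f *m (Vandermonde n (\row_(k < n) (k : nat)%:R))^T =
          diag_mx (\row_i c i) *m (Vandermonde n (\row_i (f i : nat)%:R))^T.
  apply/matrixP => i j; rewrite mul_diag_mx !mxE (bigD1 (f i)) //= big1 => [|k /negbTE nk].
    by rewrite !mxE eqxx mulr1 addr0.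
  by rewrite !mxE nk mulr0 mul0r.
by rewrite det_mulmx det_diag det_tr; congr (_ * _); apply: eq_bigr => i _; rewrite mxE.
Qed.

End SelectionMatrix.

Section Coordinates.
Variable R : rcfType.
Implicit Types u v : 'rV[R]_7.

Definition mk7 (a0 a1 a2 a3 a4 a5 a6 : R) : 'rV[R]_7 :=
  \row_(k < 7) nth 0 [:: a0; a1; a2; a3; a4; a5; a6] k.

Lemma mk7_ind (P : 'rV[R]_7 -> Prop) :
  (forall a0 a1 a2 a3 a4 a5 a6, P (mk7 a0 a1 a2 a3 a4 a5 a6)) -> forall u, P u.
Proof.
move=> Pmk7 u; suff -> : u = mk7 (u 0 (o 0)) (u 0 (o 1)) (u 0 (o 2)) (u 0 (o 3))
                                (u 0 (o 4)) (u 0 (o 5)) (u 0 (o 6)) by [].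
apply/rowP => -[[|[|[|[|[|[|[|//]]]]]]] k7]; rewrite mxE /=; congr (u _ _); exact: val_inj.
Qed.

Lemma add_mk7 a0 a1 a2 a3 a4 a5 a6 b0 b1 b2 b3 b4 b5 b6 :
  mk7 a0 a1 a2 a3 a4 a5 a6 + mk7 b0 b1 b2 b3 b4 b5 b6 =
  mk7 (a0 + b0) (a1 + b1) (a2 + b2) (a3 + b3) (a4 + b4) (a5 + b5) (a6 + b6).
Proof. by apply/rowP => -[[|[|[|[|[|[|[|//]]]]]]] ?]; rewrite !mxE. Qed.

Lemma opp_mk7 a0 a1 a2 a3 a4 a5 a6 :
  - mk7 a0 a1 a2 a3 a4 a5 a6 = mk7 (- a0) (- a1) (- a2) (- a3) (- a4) (- a5) (- a6).
Proof. by apply/rowP => -[[|[|[|[|[|[|[|//]]]]]]] ?]; rewrite !mxE. Qed.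

Lemma scale_mk7 c a0 a1 a2 a3 a4 a5 a6 :
  c *: mk7 a0 a1 a2 a3 a4 a5 a6 =
  mk7 (c * a0) (c * a1) (c * a2) (c * a3) (c * a4) (c * a5) (c * a6).
Proof. by apply/rowP => -[[|[|[|[|[|[|[|//]]]]]]] ?]; rewrite !mxE. Qed.

Lemma ecan_mk7 k :
  ecan R k = mk7 (k == o 0)%:R (k == o 1)%:R (k == o 2)%:R (k == o 3)%:R
                 (k == o 4)%:R (k == o 5)%:R (k == o 6)%:R.
Proof.
by apply/rowP => -[[|[|[|[|[|[|[|//]]]]]]] ?]; case: k => [[|[|[|[|[|[|[|//]]]]]]] ?];
  rewrite !mxE.
Qed.

Lemma mrowE k : mrow k = nth 0%N [:: 0; 0; 0; 0; 1; 1; 1]%N k :> nat.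
Proof. by rewrite inordK //; case: k => [[|[|[|[|[|[|[|]]]]]]]]. Qed.

Lemma mcolE k : mcol k = nth 0%N [:: 1; 2; 3; 4; 2; 3; 4]%N k :> nat.
Proof. by rewrite inordK //; case: k => [[|[|[|[|[|[|[|]]]]]]]]. Qed.

Definition skew5 (a0 a1 a2 a3 a4 a5 a6 : R) : 'M[R]_5 :=
  \matrix_(i < 5, j < 5) nth 0 (nth [::] [:: [::   0;   a0;   a1; a2; a3];
                                          [:: - a0;    0;   a4; a5; a6];
                                          [:: - a1; - a4;    0;  0;  0];
                                          [:: - a2; - a5;    0;  0;  0];
                                          [:: - a3; - a6;    0;  0;  0]] i) j.

Lemma emb_mk7 a0 a1 a2 a3 a4 a5 a6 :
  emb (mk7 a0 a1 a2 a3 a4 a5 a6) = skew5 a0 a1 a2 a3 a4 a5 a6.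
Proof.
apply/matrixP => i j; rewrite /emb summxE !big_ord_recl big_ord0 !mxE.
rewrite -!val_eqE /= !mrowE !mcolE /=.
by case: i => [[|[|[|[|[|//]]]]] ?]; case: j => [[|[|[|[|[|//]]]]] ?]; rewrite /=; ring.
Qed.

Lemma brm_mk7 a0 a1 a2 a3 a4 a5 a6 b0 b1 b2 b3 b4 b5 b6 :
  brm (mk7 a0 a1 a2 a3 a4 a5 a6) (mk7 b0 b1 b2 b3 b4 b5 b6) =
  mk7 (- (a1 * b4 - a4 * b1) - (a2 * b5 - a5 * b2) - (a3 * b6 - a6 * b3))
      (a0 * b4 - a4 * b0) (a0 * b5 - a5 * b0) (a0 * b6 - a6 * b0)
      (- (a0 * b1 - a1 * b0)) (- (a0 * b2 - a2 * b0)) (- (a0 * b3 - a3 * b0)).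
Proof.
apply/rowP => k; rewrite /brm !emb_mk7 !mxE !big_ord_recl !big_ord0 !mxE !mrowE !mcolE.
by case: k => [[|[|[|[|[|[|[|//]]]]]]] ?]; rewrite /=; ring.
Qed.

Variables y1 y2 y3 : R.

Lemma eta_mk7 a0 a1 a2 a3 a4 a5 a6 :
  Defs.eta y1 y2 y3 (mk7 a0 a1 a2 a3 a4 a5 a6) = Num.sqrt y1 * a0.
Proof. by rewrite /Defs.eta /Xco mxE. Qed.

Lemma xi_mk7 : xi y1 y2 y3 = mk7 (Num.sqrt y1)^-1 0 0 0 0 0 0.
Proof. by apply/rowP => -[[|[|[|[|[|[|[|//]]]]]]] ?]; rewrite !mxE /= ?mulr1 ?mulr0. Qed.

Lemma gm_mk7 a0 a1 a2 a3 a4 a5 a6 b0 b1 b2 b3 b4 b5 b6 :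
  gm y1 y2 y3 (mk7 a0 a1 a2 a3 a4 a5 a6) (mk7 b0 b1 b2 b3 b4 b5 b6) =
  y1 * a0 * b0 + y2 * (a1 * b1 + a2 * b2 + a3 * b3) + y3 * (a4 * b4 + a5 * b5 + a6 * b6).
Proof. rewrite /gm !big_ord_recl !big_ord0 !mxE /wt /=; ring. Qed.

Lemma Phi_mk7 a0 a1 a2 a3 a4 a5 a6 :
  Phi y1 y2 y3 (mk7 a0 a1 a2 a3 a4 a5 a6) =
  mk7 0 (Num.sqrt y3 / Num.sqrt y2 * a4) (Num.sqrt y3 / Num.sqrt y2 * a5)
        (Num.sqrt y3 / Num.sqrt y2 * a6) (- (Num.sqrt y2 / Num.sqrt y3 * a1))
        (- (Num.sqrt y2 / Num.sqrt y3 * a2)) (- (Num.sqrt y2 / Num.sqrt y3 * a3)).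
Proof.
apply/rowP => j; rewrite /Phi summxE !big_ord_recl big_ord0 /PhiX /Xco /Xf /wt !mxE /=.
rewrite -!val_eqE /= !inordK //.
by case: j => [[|[|[|[|[|[|[|//]]]]]]] ?]; rewrite /=; ring.
Qed.

End Coordinates.

Section PairMatrices.
Variable R : numDomainType.

Definition partner (k : 'I_7) : 'I_7 :=
  match val k with 1 => o 4 | 2 => o 5 | 3 => o 6 | 4 => o 1 | 5 => o 2 | 6 => o 3 | _ => o 0 end.

Definition orient (k : 'I_7) : R := match val k with 0 => 0 | 1 | 2 | 3 => 1 | _ => -1 end.

Definition pair_col (t1 t2 t3 i : 'I_7) : 'I_7 :=
  match val i with
  | 0 => o 0 | 1 => t1 | 2 => partner t1 | 3 => t2 | 4 => partner t2 | 5 => t3 | _ => partner t3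
  end.

Definition pair_coef (t1 t2 t3 i : 'I_7) : R :=
  match val i with 2 => orient t1 | 4 => orient t2 | 6 => orient t3 | _ => 1 end.

Definition pair_mx (t1 t2 t3 : 'I_7) : 'M[R]_7 := sel_mx (pair_coef t1 t2 t3) (pair_col t1 t2 t3).

Definition pair_class (k : 'I_7) : nat := match val k with 0 => 0 | 1 | 4 => 1 | 2 | 5 => 2 | _ => 3 end.

Lemma prod7 (F : 'I_7 -> R) :
  \prod_(i < 7) F i = F (o 0) * F (o 1) * F (o 2) * F (o 3) * F (o 4) * F (o 5) * F (o 6).
Proof.
rewrite !big_ord_recl big_ord0 mulr1 !mulrA.
by repeat congr (_ * _); congr F; apply: val_inj.
Qed.

Lemma sum7 (F : 'I_7 -> R) :
  \sum_(i < 7) F i = F (o 0) + F (o 1) + F (o 2) + F (o 3) + F (o 4) + F (o 5) + F (o 6).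
Proof.
rewrite !big_ord_recl big_ord0 addr0 !addrA.
by repeat congr (_ + _); congr F; apply: val_inj.
Qed.

Lemma vdm7E (x : 'I_7 -> R) : vdm x =
  (x (o 1) - x (o 0)) * (x (o 2) - x (o 0)) * (x (o 3) - x (o 0)) * (x (o 4) - x (o 0))
  * (x (o 5) - x (o 0)) * (x (o 6) - x (o 0))
  * (x (o 2) - x (o 1)) * (x (o 3) - x (o 1)) * (x (o 4) - x (o 1)) * (x (o 5) - x (o 1))
  * (x (o 6) - x (o 1))
  * (x (o 3) - x (o 2)) * (x (o 4) - x (o 2)) * (x (o 5) - x (o 2)) * (x (o 6) - x (o 2))
  * (x (o 4) - x (o 3)) * (x (o 5) - x (o 3)) * (x (o 6) - x (o 3))
  * (x (o 5) - x (o 4)) * (x (o 6) - x (o 4))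
  * (x (o 6) - x (o 5)).
Proof. by rewrite /vdm prod7 !(big_mkcond (fun j : 'I_7 => (_ < j)%N)) !prod7 /=; ring. Qed.

Lemma pair_term t1 t2 t3 :
  \prod_i pair_coef t1 t2 t3 i * vdm (fun i => (pair_col t1 t2 t3 i : nat)%:R) =
  if perm_eq [:: pair_class t1; pair_class t2; pair_class t3] [:: 1; 2; 3]%N
  then - vdm (fun i : 'I_7 => i%:R) else 0.
Proof.
rewrite !vdm7E prod7 /pair_coef /pair_col /=.
case: t1 => [[|[|[|[|[|[|[|//]]]]]]] ?]; case: t2 => [[|[|[|[|[|[|[|//]]]]]]] ?];
  case: t3 => [[|[|[|[|[|[|[|//]]]]]]] ?]; rewrite /= /orient /=.
all: ring.
Qed.

Lemma sum_det_pair_mx :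
  \sum_(t1 < 7) \sum_(t2 < 7) \sum_(t3 < 7) \det (pair_mx t1 t2 t3) = -48.
Proof.
have vdm_id_neq0 : vdm (fun i : 'I_7 => i%:R) != 0 :> R.
  by rewrite vdm7E /=; repeat apply: mulf_neq0; rewrite subr_eq0 eqr_nat.
apply: (mulIf vdm_id_neq0); rewrite mulr_suml.
under eq_bigr do rewrite mulr_suml; under eq_bigr do under eq_bigr do rewrite mulr_suml.
under eq_bigr do under eq_bigr do under eq_bigr do rewrite det_sel_mx_vdm pair_term.
by rewrite !sum7 /=; ring.
Qed.

End PairMatrices.

Section EtaDeta3.
Variables (R : rcfType) (y1 y2 y3 : R).

Lemma eta_ecan k : Defs.eta y1 y2 y3 (ecan R k) = Num.sqrt y1 * (k == o 0)%:R.
Proof. by rewrite ecan_mk7 eta_mk7. Qed.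

Lemma deta_ecan a b :
  deta y1 y2 y3 (ecan R a) (ecan R b) = Num.sqrt y1 * (orient R a * (b == partner a)%:R).
Proof.
rewrite /deta !ecan_mk7 brm_mk7 eta_mk7.
by case: a => [[|[|[|[|[|[|[|//]]]]]]] ?]; case: b => [[|[|[|[|[|[|[|//]]]]]]] ?];
  rewrite /= /orient /=; ring.
Qed.

Lemma eta_deta3_pair_mx : eta_deta3 y1 y2 y3 =
  Num.sqrt y1 ^+ 4 * \sum_(t1 < 7) \sum_(t2 < 7) \sum_(t3 < 7) \det (pair_mx R t1 t2 t3).
Proof.
rewrite /eta_deta3 (inord7 (isT : 0 < 7)%N) (inord7 (isT : 1 < 7)%N) (inord7 (isT : 2 < 7)%N)
  (inord7 (isT : 3 < 7)%N) (inord7 (isT : 4 < 7)%N) (inord7 (isT : 5 < 7)%N)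
  (inord7 (isT : 6 < 7)%N).
under eq_bigr do rewrite eta_ecan !deta_ecan.
rewrite /determinant exchange_sum3 mulr_sumr; apply: eq_bigr => s _.
have pair_mx_diag t1 t2 t3 : (-1) ^+ s * \prod_i pair_mx R t1 t2 t3 i (s i) =
    ((-1) ^+ s * (s (o 0) == o 0)%:R)
    * ((s (o 1) == t1)%:R * (orient R t1 * (s (o 2) == partner t1)%:R))
    * ((s (o 3) == t2)%:R * (orient R t2 * (s (o 4) == partner t2)%:R))
    * ((s (o 5) == t3)%:R * (orient R t3 * (s (o 6) == partner t3)%:R)).
  (* [ring] must see the sign of [s] as an atom, not as a power with exponent [odd_perm s]. *)
  by rewrite prod7 !mxE /pair_coef /pair_col /=; move: ((-1) ^+ s : R) => sgn_s; ring.
under eq_bigr do under eq_bigr do under eq_bigr do rewrite pair_mx_diag.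
by rewrite sum3_mul !sum_pick; move: ((-1) ^+ s : R) => sgn_s; ring.
Qed.

Lemma eta_deta3E : eta_deta3 y1 y2 y3 = -48 * Num.sqrt y1 ^+ 4.
Proof. by rewrite eta_deta3_pair_mx sum_det_pair_mx mulrC. Qed.

End EtaDeta3.

Section SquareWeights.
Variables (R : rcfType) (r p q : R).
Hypotheses (r_gt0 : 0 < r) (p_gt0 : 0 < p) (q_gt0 : 0 < q).

Local Notation y1 := (r ^+ 2).
Local Notation y2 := (p ^+ 2).
Local Notation y3 := (q ^+ 2).

Let roots_neq0 := (lt0r_neq0 r_gt0, lt0r_neq0 p_gt0, lt0r_neq0 q_gt0).

Lemma sqrt_weights :
  [/\ Num.sqrt y1 = r, Num.sqrt y2 = p & Num.sqrt y3 = q].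
Proof. by rewrite !sqrtr_sqr !gtr0_norm. Qed.

Lemma eta_xi_sq : Defs.eta y1 y2 y3 (xi y1 y2 y3) = 1.
Proof. by case: sqrt_weights => r_E _ _; rewrite xi_mk7 eta_mk7 r_E divff ?roots_neq0. Qed.

Lemma Phi2_sq u : Phi y1 y2 y3 (Phi y1 y2 y3 u) = - u + Defs.eta y1 y2 y3 u *: xi y1 y2 y3.
Proof.
case: sqrt_weights => r_E p_E q_E; elim/mk7_ind: u => a0 a1 a2 a3 a4 a5 a6.
rewrite !Phi_mk7 eta_mk7 xi_mk7 r_E p_E q_E opp_mk7 scale_mk7 add_mk7.
by congr mk7; field; rewrite ?roots_neq0.
Qed.

Lemma gm_Phi_sq u v :
  gm y1 y2 y3 (Phi y1 y2 y3 u) (Phi y1 y2 y3 v) =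
  gm y1 y2 y3 u v - Defs.eta y1 y2 y3 u * Defs.eta y1 y2 y3 v.
Proof.
case: sqrt_weights => r_E p_E q_E.
elim/mk7_ind: u => a0 a1 a2 a3 a4 a5 a6; elim/mk7_ind: v => b0 b1 b2 b3 b4 b5 b6.
by rewrite !Phi_mk7 !gm_mk7 !eta_mk7 r_E p_E q_E; field; rewrite ?roots_neq0.
Qed.

Lemma deta_gm_sq u v : r = 2 * p * q ->
  deta y1 y2 y3 u v = 2 * gm y1 y2 y3 u (Phi y1 y2 y3 v).
Proof.
case: sqrt_weights => r_E p_E q_E r_2pq.
elim/mk7_ind: u => a0 a1 a2 a3 a4 a5 a6; elim/mk7_ind: v => b0 b1 b2 b3 b4 b5 b6.
rewrite /deta brm_mk7 Phi_mk7 gm_mk7 eta_mk7 r_E p_E q_E r_2pq.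
by field; rewrite ?roots_neq0.
Qed.

Lemma Nij_mk7_sq a0 a1 a2 a3 a4 a5 a6 b0 b1 b2 b3 b4 b5 b6 :
  let u := mk7 a0 a1 a2 a3 a4 a5 a6 in let v := mk7 b0 b1 b2 b3 b4 b5 b6 in
  Nij y1 y2 y3 u v + deta y1 y2 y3 u v *: xi y1 y2 y3 =
  (y3 - y2) *: mk7 0 ((a0 * b4 - a4 * b0) / y2) ((a0 * b5 - a5 * b0) / y2)
    ((a0 * b6 - a6 * b0) / y2) ((a0 * b1 - a1 * b0) / y3)
    ((a0 * b2 - a2 * b0) / y3) ((a0 * b3 - a3 * b0) / y3).
Proof.
case: sqrt_weights => r_E p_E q_E u v.
rewrite /Nij /deta !Phi_mk7 !brm_mk7 !Phi_mk7 eta_mk7 xi_mk7 r_E p_E q_E.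
rewrite !opp_mk7 !scale_mk7 !add_mk7.
by congr mk7; field; rewrite ?roots_neq0.
Qed.

Lemma normal_sq : Defs.normal y1 y2 y3 <-> y2 = y3.
Proof.
split => [N_xi | y2_y3 u v].
  have := Nij_mk7_sq 1 0 0 0 0 0 0 0 1 0 0 0 0 0.
  rewrite /= N_xi scaleNr addNr scale_mk7 => /rowP/(_ (o 4)).
  rewrite !mxE /= mul1r mulr0 subr0 mul1r => /esym/eqP.
  by rewrite mulf_eq0 invr_eq0 sqrf_eq0 (gt_eqF q_gt0) orbF subr_eq0 => /eqP ->.
elim/mk7_ind: u => a0 a1 a2 a3 a4 a5 a6; elim/mk7_ind: v => b0 b1 b2 b3 b4 b5 b6.
apply/eqP; rewrite scaleNr -subr_eq0 opprK.
by rewrite Nij_mk7_sq // y2_y3 subrr scale0r.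
Qed.

Lemma contact_metric_sq : r = 2 * p * q -> contact_metric y1 y2 y3.
Proof.
move=> r_2pq; split.
- rewrite eta_deta3E sqrtr_sqr gtr0_norm //.
  by rewrite mulf_neq0 ?oppr_eq0 ?pnatr_eq0 ?expf_neq0 ?lt0r_neq0.
- exact: eta_xi_sq.
- exact: Phi2_sq.
- exact: gm_Phi_sq.
- by move=> u v; apply: deta_gm_sq.
Qed.

End SquareWeights.

Lemma pos_sqr (R : rcfType) (x : R) : 0 < x -> exists2 r : R, 0 < r & x = r ^+ 2.
Proof. by move=> x_gt0; exists (Num.sqrt x); rewrite ?sqrtr_gt0 ?sqr_sqrtr ?ltW. Qed.

Theorem theorem2p9 (R : rcfType) (y1 y2 y3 : R) :
  0 < y1 -> 0 < y2 -> 0 < y3 -> y1 = 4 * y2 * y3 ->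
  (sasakian y1 y2 y3 <-> (y1 = 4 * y2 ^+ 2 /\ y2 = y3)).
Proof.
move=> /pos_sqr[r r_gt0 ->] /pos_sqr[p p_gt0 ->] /pos_sqr[q q_gt0 ->] y1E.
have r_2pq : r = 2 * p * q.
  apply/eqP; rewrite -(eqrXn2 (_ : 0 < 2)%N) ?mulr_ge0 ?ltW // y1E; apply/eqP; ring.
rewrite /sasakian normal_sq //; split=> [[_ p2_q2] | [_ p2_q2]].
  by split=> //; rewrite y1E -p2_q2; ring.
by split=> //; apply: contact_metric_sq.
Qed.
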